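(* Let $\mathcal{K}\subseteq\mathcal{E}$ be a full-dimensional pointed closed convex cone in a finite-dimensional Euclidean space $\mathcal{E}$. If $\mathcal{F}$ is an amenable face of $\mathcal{K}$ of codimension $1$ (i.e. $\dim\mathcal{F}=\dim\mathcal{K}-1$), then $\mathcal{F}$ is projectionally exposed.
   Context: A face of a closed convex cone $\mathcal{K}$ is a closed convex subset $\mathcal{F}\subseteq\mathcal{K}$ such that whenever $x,y\in\mathcal{K}$ and $\alpha x+(1-\alpha)y\in\mathcal{F}$ for some $\alpha\in(0,1)$, then $x,y\in\mathcal{F}$. A face $\mathcal{F}$ is amenable if for every bounded set $B$ there exists $\kappa>0$ with $\operatorname{dist}(x,\mathcal{F})\le\kappa\operatorname{dist}(x,\mathcal{K})$ for all $x\in(\operatorname{span}\mathcal{F})\cap B$ (equivalently, for cones, a single $\kappa$ works for all $x\in\operatorname{span}\mathcal{F}$). A face $\mathcal{F}$ is projectionally exposed if there is an idempotent linear map $P:\mathcal{E}\to\mathcal{E}$ (not necessarily orthogonal) with $P(\mathcal{K})=\mathcal{F}$. Pointed means $\mathcal{K}\cap(-\mathcal{K})=\{0\}$; full-dimensional means $\dim\mathcal{K}=\dim\mathcal{E}$. *)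

From HB Require Import structures.
From mathcomp Require Import all_boot all_order all_algebra.
From mathcomp Require Import all_classical all_reals all_analysis.
Set Implicit Arguments. Unset Strict Implicit. Unset Printing Implicit Defensive.
Import Order.TTheory GRing.Theory Num.Theory.
Import numFieldNormedType.Exports.
Local Open Scope classical_set_scope.
Local Open Scope ring_scope.

(* The Euclidean space E is modelled as R^n = 'rV[R]_n with the standard
   inner product. *)

Definition enorm (R : realType) (n : nat) (x : 'rV[R]_n) : R :=
  Num.sqrt (\sum_(i < n) x ord0 i ^+ 2).

Definition edist (R : realType) (n : nat) (x : 'rV[R]_n) (S : set 'rV[R]_n) : R :=
  inf [set enorm (x - y) | y in S].

Definition lin_span (R : realType) (n : nat) (S : set 'rV[R]_n) : set 'rV[R]_n :=
  [set x | exists (k : nat) (c : 'I_k -> R) (v : 'I_k -> 'rV[R]_n),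
      (forall i, S (v i)) /\ x = \sum_(i < k) c i *: v i].

Definition has_dim (R : realType) (n : nat) (S : set 'rV[R]_n) (d : nat) : Prop :=
  exists A : 'M[R]_(d, n), row_free A /\
    forall x : 'rV[R]_n, lin_span S x <-> (x <= A)%MS.

Definition convex_cone (R : realType) (n : nat) (K : set 'rV[R]_n) : Prop :=
  K 0 /\ forall x y (a b : R), K x -> K y -> 0 <= a -> 0 <= b -> K (a *: x + b *: y).

Definition closed_convex_cone (R : realType) (n : nat) (K : set 'rV[R]_n) : Prop :=
  closed K /\ convex_cone K.

Definition pointed (R : realType) (n : nat) (K : set 'rV[R]_n) : Prop :=
  forall x, K x -> K (- x) -> x = 0.

Definition full_dimensional (R : realType) (n : nat) (K : set 'rV[R]_n) : Prop :=
  has_dim K n.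

Definition is_convex_set (R : realType) (n : nat) (S : set 'rV[R]_n) : Prop :=
  forall x y (a : R), S x -> S y -> 0 <= a <= 1 -> S (a *: x + (1 - a) *: y).

Definition is_face (R : realType) (n : nat) (K F : set 'rV[R]_n) : Prop :=
  F !=set0 /\ F `<=` K /\ closed F /\ is_convex_set F /\
  forall x y (a : R), K x -> K y -> 0 < a < 1 -> F (a *: x + (1 - a) *: y) ->
    F x /\ F y.

Definition ebounded (R : realType) (n : nat) (B : set 'rV[R]_n) : Prop :=
  exists M : R, forall x, B x -> enorm x <= M.

Definition amenable_face (R : realType) (n : nat) (K F : set 'rV[R]_n) : Prop :=
  is_face K F /\
  forall B : set 'rV[R]_n, ebounded B ->
    exists kappa : R, 0 < kappa /\
      forall x, lin_span F x -> B x -> edist x F <= kappa * edist x K.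

Definition proj_exposed (R : realType) (n : nat) (K F : set 'rV[R]_n) : Prop :=
  is_face K F /\
  exists P : 'M[R]_n, P *m P = P /\ [set x *m P | x in K] = F.

From Pilot Require Import Defs.
From mathcomp Require Import all_boot all_order all_algebra.
From mathcomp Require Import all_classical all_reals all_analysis.
From mathcomp Require Import ring lra.
Import Order.TTheory GRing.Theory Num.Theory.
Import numFieldNormedType.Exports.
Local Open Scope classical_set_scope.
Local Open Scope ring_scope.
Set Implicit Arguments. Unset Strict Implicit. Unset Printing Implicit Defensive.

(* Since F has codimension one, span F is a hyperplane a^⊥, and the face
   property forces K to lie on one side of it, say a·x >= 0 on K.  It suffices
   to find d with a·d = 1 and x - (a·x) d ∈ F for every x ∈ K: then
   P = I - a^T d (acting on row vectors) is idempotent and P(K) = F.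
   Fix any e with a·e = 1.  For x ∈ K the point x - (a·x) e lies in span F at
   distance at most (a·x)|e| from K, so amenability and homogeneity give a
   point of F within O(a·x) of it.  A relative interior point g of F absorbs
   this error, so x - (a·x)(e - ρ g) ∈ F for ρ large enough: d = e - ρ g. *)

Section Euclidean.
Variable R : realType.

Definition dot n (x y : 'rV[R]_n) : R := (x *m y^T) 0 0.

Lemma dotE n (x y : 'rV[R]_n) : dot x y = \sum_j x 0 j * y 0 j.
Proof. by rewrite /dot !mxE; apply: eq_bigr => j _; rewrite mxE. Qed.

Lemma dotDl n (x y a : 'rV[R]_n) : dot (x + y) a = dot x a + dot y a.
Proof. by rewrite /dot mulmxDl mxE. Qed.

Lemma dotZl n c (x a : 'rV[R]_n) : dot (c *: x) a = c * dot x a.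
Proof. by rewrite /dot -scalemxAl mxE. Qed.

Lemma dotNl n (x a : 'rV[R]_n) : dot (- x) a = - dot x a.
Proof. by rewrite -scaleN1r dotZl mulN1r. Qed.

Lemma dotBl n (x y a : 'rV[R]_n) : dot (x - y) a = dot x a - dot y a.
Proof. by rewrite dotDl dotNl. Qed.

Lemma dotNr n (x a : 'rV[R]_n) : dot x (- a) = - dot x a.
Proof. by rewrite !dotE -sumrN; apply: eq_bigr => j _; rewrite mxE mulrN. Qed.

Lemma dot_self_eq0 n (a : 'rV[R]_n) : (dot a a == 0) = (a == 0).
Proof.
apply/eqP/eqP => [|->]; last by rewrite /dot mul0mx mxE.
rewrite dotE => aa0; apply/rowP => j.
have := psumr_eq0P (fun j _ => sqr_ge0 (a 0 j)) aa0 (i := j) isT.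
by rewrite mxE => /eqP; rewrite mulf_eq0 orbb => /eqP.
Qed.

Lemma dot_normalized n (a : 'rV[R]_n) : a != 0 -> dot ((dot a a)^-1 *: a) a = 1.
Proof. by move=> a0; rewrite dotZl mulVf ?dot_self_eq0. Qed.

Definition oblique_proj n (a d : 'rV[R]_n) : 'M[R]_n := 1%:M - a^T *m d.

Lemma mul_oblique_proj n (x a d : 'rV[R]_n) : x *m oblique_proj a d = x - dot x a *: d.
Proof. by rewrite mulmxBr mulmx1 mulmxA [x *m a^T]mx11_scalar mul_scalar_mx. Qed.

Lemma oblique_proj_idem n (a d : 'rV[R]_n) :
  dot d a = 1 -> oblique_proj a d *m oblique_proj a d = oblique_proj a d.
Proof.
move=> da; have daT : d *m a^T = 1%:M by rewrite [LHS]mx11_scalar; congr _%:M.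
by rewrite /oblique_proj mulmxBl mul1mx mulmxBr mulmx1 -mulmxA (mulmxA d) daT
  mul1mx subrr subr0.
Qed.

Lemma enorm_ge0 n (x : 'rV[R]_n) : 0 <= enorm x.
Proof. exact: sqrtr_ge0. Qed.

Lemma enorm0 n : enorm (0 : 'rV[R]_n) = 0.
Proof. by rewrite /enorm big1 ?sqrtr0 // => i _; rewrite mxE expr0n. Qed.

Lemma enorm_coord n (x : 'rV[R]_n) i : `|x 0 i| <= enorm x.
Proof.
rewrite /enorm -sqrtr_sqr ler_sqrt; last by apply: sumr_ge0 => j _; exact: sqr_ge0.
by rewrite (bigD1 i) //= lerDl; apply: sumr_ge0 => j _; exact: sqr_ge0.
Qed.

Lemma enormZ n c (x : 'rV[R]_n) : enorm (c *: x) = `|c| * enorm x.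
Proof.
rewrite /enorm -sqrtr_sqr -sqrtrM ?sqr_ge0 //; congr Num.sqrt.
by rewrite mulr_sumr; apply: eq_bigr => j _; rewrite mxE; ring.
Qed.

Lemma enormN n (x : 'rV[R]_n) : enorm (- x) = enorm x.
Proof. by rewrite -scaleN1r enormZ normrN1 mul1r. Qed.

Lemma enorm_le_sum n (x : 'rV[R]_n) : enorm x <= \sum_i `|x 0 i|.
Proof.
have sum_ge0 : 0 <= \sum_i `|x 0 i| by apply: sumr_ge0 => i _.
rewrite /enorm -(ger0_norm sum_ge0) -sqrtr_sqr ler_sqrt ?sqr_ge0 //.
rewrite expr2 mulr_suml; apply: ler_sum => i _.
rewrite -(real_normK (num_real (x 0 i))) expr2 ler_wpM2l //.
by rewrite (bigD1 i) //= lerDl; apply: sumr_ge0 => j _.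
Qed.

Lemma enorm_mulmx_le n p (x : 'rV[R]_n) (M : 'M[R]_(n, p)) :
  enorm (x *m M) <= enorm x * \sum_i \sum_j `|M i j|.
Proof.
apply: le_trans (enorm_le_sum _) _.
rewrite exchange_big mulr_sumr; apply: ler_sum => j _; rewrite mxE mulr_sumr.
apply: le_trans (ler_norm_sum _ _ _) _; apply: ler_sum => i _.
by rewrite normrM ler_wpM2r // enorm_coord.
Qed.

Lemma ebounded_mulmx n p (S : set 'rV[R]_n) (M : 'M[R]_(n, p)) :
  ebounded S -> ebounded [set x *m M | x in S].
Proof.
case=> c Sc; exists (c * \sum_i \sum_j `|M i j|) => _ [x Sx <-].
apply: le_trans (enorm_mulmx_le x M) _; rewrite ler_wpM2r ?Sc //.
by apply: sumr_ge0 => i _; apply: sumr_ge0.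
Qed.

Definition relint_point n (F : set 'rV[R]_n) g : Prop :=
  F g /\ exists2 r, 0 < r & forall b, lin_span F b -> enorm b <= r -> F (g + b).

Lemma edist_le n (x : 'rV[R]_n) S y : S y -> Defs.edist x S <= enorm (x - y).
Proof.
move=> Sy; apply: ge_inf; last by exists y.
by exists 0 => _ [z _ <-]; exact: enorm_ge0.
Qed.

Lemma edist_lt n (x : 'rV[R]_n) S c :
  S !=set0 -> Defs.edist x S < c -> exists2 y, S y & enorm (x - y) < c.
Proof.
move=> [y Sy] /inf_lt[]; first by exists (enorm (x - y)), y.
by move=> _ [z Sz <-] xz; exists z.
Qed.

Lemma row_free_hyperplane m (A : 'M[R]_(m, m.+1)) : row_free A ->
  exists2 a : 'rV[R]_m.+1, a != 0 & forall x, (x <= A)%MS <-> dot x a = 0.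
Proof.
move=> /eqP rkA.
have rkN : \rank (kermx A^T) = 1%N by rewrite mxrank_ker mxrank_tr rkA subSnn.
have /rowV0Pn[a /sub_kermxP aA a0] : kermx A^T != 0 by rewrite -mxrank_eq0 rkN.
have ker_dot x : (x <= kermx a^T)%MS <-> dot x a = 0.
  split=> [/sub_kermxP xa | xa]; first by rewrite /dot xa mxE.
  by apply/sub_kermxP/matrixP => i j; rewrite !ord1 [RHS]mxE.
have AK : (A <= kermx a^T)%MS.
  by apply/sub_kermxP/trmx_inj; rewrite trmx_mul trmxK trmx0.
have KA : (kermx a^T <= A)%MS.
  by rewrite -(mxrank_leqif_sup AK).2 rkA mxrank_ker mxrank_tr rank_rV a0 subn1.
exists a => // x; rewrite -ker_dot.
by split=> xA; [exact: submx_trans xA AK | exact: submx_trans xA KA].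
Qed.

End Euclidean.

Section Face.
Variables (R : realType) (n : nat) (K F : set 'rV[R]_n).
Hypotheses (cK : convex_cone K) (fF : is_face K F).

Let half01 : 0 < (2^-1 : R) < 1.
Proof. by apply/andP; split; [rewrite invr_gt0 | rewrite invf_lt1]; lra. Qed.

Lemma cone_scale c x : 0 <= c -> K x -> K (c *: x).
Proof.
move=> c0 Kx; have := cK.2 x x c 0 Kx Kx c0 (lexx 0).
by rewrite scale0r addr0.
Qed.

Lemma face_subset : F `<=` K.
Proof. by case: fF => _ []. Qed.

Lemma face0 : F 0.
Proof.
case: fF => [[f Ff] [FK [_ [_ face]]]].
have K2f : K (2 *: f) by apply: cone_scale => //; exact: FK.
have mid : 2^-1 *: (2 *: f) + (1 - 2^-1) *: 0 = f.
  by rewrite scalerA mulVf ?pnatr_eq0 // scale1r scaler0 addr0.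
by have := face _ _ _ K2f cK.1 half01; rewrite mid => /(_ Ff)[].
Qed.

Lemma face_scale c x : 0 <= c -> F x -> F (c *: x).
Proof.
move=> c0 Fx; case: fF => [_ [FK [_ [cvx face]]]].
have [c1|c1] := lerP c 1.
  by have := cvx x 0 c Fx face0; rewrite scaler0 addr0; apply; rewrite c0 c1.
have inv01 : 0 < c^-1 < 1.
  by apply/andP; split; [rewrite invr_gt0 | rewrite invf_lt1]; lra.
have Kcx : K (c *: x) by apply: cone_scale => //; exact: FK.
case: (face _ _ _ Kcx cK.1 inv01) => //.
by rewrite scaler0 addr0 scalerA mulVf ?scale1r // gt_eqF //; lra.
Qed.

Lemma faceD x y : F x -> F y -> F (x + y).
Proof.
move=> Fx Fy; case: fF => [_ [_ [_ [cvx _]]]].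
have -> : x + y = 2 *: (2^-1 *: x + (1 - 2^-1) *: y).
  by apply/rowP => j; rewrite !mxE; field.
apply: face_scale => //; apply: cvx => //.
by case/andP: half01 => /ltW -> /ltW ->.
Qed.

Lemma face_sum (I : finType) (v : I -> 'rV[R]_n) :
  (forall i, F (v i)) -> F (\sum_i v i).
Proof. by move=> Fv; apply: (big_ind F); [exact: face0 | exact: faceD |]. Qed.

Lemma lin_span_face x : F x -> lin_span F x.
Proof.
by move=> Fx; exists 1%N, (fun=> 1), (fun=> x); rewrite big_ord1 scale1r.
Qed.

Lemma lin_span_face_decomp x :
  lin_span F x -> exists p q, [/\ F p, F q & x = p - q].
Proof.
case=> k [c [v [Fv ->]]].
exists (\sum_i ((`|c i| + c i) / 2) *: v i), (\sum_i ((`|c i| - c i) / 2) *: v i).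
split; try by apply: face_sum => i; apply: face_scale => //;
  have := ler_norm (c i); have := ler_norm (- c i); rewrite normrN; lra.
rewrite -sumrB; apply: eq_bigr => i _; rewrite -scalerBl.
by congr (_ *: _); field.
Qed.

(* The midpoint of x and 2q is the midpoint of p and q, which lies in F. *)
Lemma cone_span_face x : K x -> lin_span F x -> F x.
Proof.
move=> Kx /lin_span_face_decomp[p [q [Fp Fq xpq]]].
case: fF => [_ [FK [_ [cvx face]]]].
have K2q : K (2 *: q) by apply: cone_scale => //; exact: FK.
suff Fmid : F (2^-1 *: x + (1 - 2^-1) *: (2 *: q)).
  by case: (face _ _ _ Kx K2q half01 Fmid).
have -> : 2^-1 *: x + (1 - 2^-1) *: (2 *: q) = 2^-1 *: p + (1 - 2^-1) *: q.
  by apply/rowP => j; rewrite xpq !mxE; field.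
by apply: cvx => //; case/andP: half01 => /ltW -> /ltW ->.
Qed.

(* With row i A = p_i - q_i, the point g = \sum_i (p_i + q_i) works: a small
   b = \sum_i beta_i row_i A only moves the weights of p_i, q_i to 1 +- beta_i. *)
Lemma exists_relint_point k (A : 'M[R]_(k, n)) :
  (forall x, lin_span F x <-> (x <= A)%MS) -> exists g, relint_point F g.
Proof.
move=> spanA.
have rows_decomp i : exists pq : 'rV[R]_n * 'rV[R]_n,
    [/\ F pq.1, F pq.2 & row i A = pq.1 - pq.2].
  have /spanA/lin_span_face_decomp[p [q [Fp Fq e]]] := row_sub i A.
  by exists (p, q).
have [pq hpq] := choice rows_decomp.
set S := \sum_i \sum_j `|pinvmx A i j| + 1.
have S0 : 0 < S by apply: ltr_wpDl => //; do 2!apply: sumr_ge0 => ? _.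
exists (\sum_i ((pq i).1 + (pq i).2)); split.
  by apply: face_sum => i; have [? ? _] := hpq i; exact: faceD.
exists S^-1 => [|b /spanA bA nb]; first by rewrite invr_gt0.
set beta := b *m pinvmx A.
have beta1 i : `|beta 0 i| <= 1.
  apply: le_trans (enorm_coord _ _) _; apply: le_trans (enorm_mulmx_le _ _) _.
  rewrite -(mulVf (lt0r_neq0 S0)); apply: ler_pM => //; first exact: enorm_ge0.
    by apply: sumr_ge0 => i' _; apply: sumr_ge0.
  by rewrite lerDl.
have hb : b = \sum_i beta 0 i *: ((pq i).1 - (pq i).2).
  rewrite -{1}(mulmxKpV bA) mulmx_sum_row; apply: eq_bigr => i _.
  by have [_ _ ->] := hpq i.
have -> : \sum_i ((pq i).1 + (pq i).2) + b =
    \sum_i ((1 + beta 0 i) *: (pq i).1 + (1 - beta 0 i) *: (pq i).2).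
  by rewrite hb -big_split; apply: eq_bigr => i _; apply/rowP => j; rewrite !mxE; ring.
apply: face_sum => i; have [Fp Fq _] := hpq i.
move: (beta1 i); rewrite ler_norml => /andP[lo hi].
by apply: faceD; apply: face_scale => //; lra.
Qed.

Section Hyperplane.
Variable a : 'rV[R]_n.
Hypothesis spanF : forall x, lin_span F x <-> dot x a = 0.

(* The segment from x to y crosses span F inside K, hence inside F, and the
   face property would put x in F. *)
Lemma cone_not_both_sides x y : K x -> K y -> 0 < dot x a -> dot y a < 0 -> False.
Proof.
move=> Kx Ky xa ya.
set s := - dot y a / (dot x a - dot y a).
have s01 : 0 < s < 1 by apply/andP; split; rewrite /s ?ltr_pdivrMr ?divr_gt0; lra.
have Kz : K (s *: x + (1 - s) *: y) by case/andP: s01 => *; apply: cK.2 => //; lra.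
have Fz : F (s *: x + (1 - s) *: y).
  apply: cone_span_face => //; apply/spanF.
  by rewrite dotDl !dotZl /s; field; lra.
have [Fx _] := fF.2.2.2.2 _ _ _ Kx Ky s01 Fz.
by have := (spanF x).1 (lin_span_face Fx); lra.
Qed.

Lemma cone_halfspace :
  (forall x, K x -> 0 <= dot x a) \/ (forall x, K x -> dot x a <= 0).
Proof.
case: (pselect (forall x, K x -> 0 <= dot x a)) => [|/existsNP[y]]; first by left.
move=> /not_implyP[Ky /negP]; rewrite -ltNge => ya.
right=> x Kx; rewrite leNgt; apply/negP => xa.
exact: (cone_not_both_sides Kx Ky).
Qed.

Section Supporting.
Variable e : 'rV[R]_n.
Hypotheses (a_ge0 : forall x, K x -> 0 <= dot x a) (ea : dot e a = 1).
Hypothesis amen : amenable_face K F.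

Lemma amenable_near_face : exists2 c, 0 < c &
  forall x, K x -> exists2 f, F f & enorm (x - dot x a *: e - f) <= c * dot x a.
Proof.
have Bbd : ebounded [set x *m oblique_proj a e | x in [set x | enorm x <= 1]].
  by apply: ebounded_mulmx; exists 1.
have [kap [kap0 hkap]] := amen.2 _ Bbd.
(* The + 1 makes the bound strict, leaving room for an almost nearest point. *)
set c := kap * enorm e + 1.
have c0 : 0 < c by have := enorm_ge0 e; rewrite /c; nra.
have near_ball y : K y -> enorm y <= 1 ->
    exists2 f, F f & enorm (y - dot y a *: e - f) <= c * dot y a.
  move=> Ky y1; set t := dot y a; set w := y - t *: e.
  have := a_ge0 Ky; rewrite -/t le_eqVlt => /predU1P[t0|tpos].
    exists y; first by apply: cone_span_face => //; apply/spanF.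
    by rewrite /w -t0 scale0r subr0 subrr enorm0 mulr0.
  have wspan : lin_span F w by apply/spanF; rewrite dotBl dotZl ea mulr1 subrr.
  have Bw : [set x *m oblique_proj a e | x in [set x | enorm x <= 1]] w.
    by exists y; rewrite // mul_oblique_proj.
  have distK : Defs.edist w K <= t * enorm e.
    apply: le_trans (edist_le w Ky) _.
    by rewrite /w addrAC subrr add0r enormN enormZ (ger0_norm (ltW tpos)).
  have distF : Defs.edist w F < c * t.
    apply: le_lt_trans (hkap w wspan Bw) _.
    apply: le_lt_trans (ler_wpM2l (ltW kap0) distK) _.
    by rewrite /c mulrDl mul1r ltr_pwDr // -mulrA [enorm e * t]mulrC.
  have [f Ff wf] := edist_lt fF.1 distF.
  by exists f; last exact: ltW.
exists c => // x Kx; set s := enorm x + 1.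
have s0 : 0 < s by rewrite /s ltr_wpDl ?enorm_ge0.
have Ks : K (s^-1 *: x) by apply: cone_scale => //; rewrite invr_ge0 ltW.
have s1 : enorm (s^-1 *: x) <= 1.
  by rewrite enormZ ger0_norm ?invr_ge0 ?(ltW s0) // ler_pdivrMl // mulr1 lerDl.
have [f Ff xf] := near_ball _ Ks s1.
exists (s *: f); first by apply: face_scale => //; exact: ltW.
have -> : x - dot x a *: e - s *: f = s *: (s^-1 *: x - dot (s^-1 *: x) a *: e - f).
  by rewrite dotZl; apply/rowP => j; rewrite !mxE; field; rewrite gt_eqF.
rewrite enormZ ger0_norm ?(ltW s0) //; apply: le_trans (ler_wpM2l (ltW s0) xf) _.
by rewrite dotZl mulrCA mulVKf ?gt_eqF.
Qed.

Lemma face_direction_ge0 g : relint_point F g ->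
  exists2 d, dot d a = 1 & forall x, K x -> F (x - dot x a *: d).
Proof.
move=> [Fg [r r0 ball]].
have [c c0 near] := amenable_near_face.
have ga : dot g a = 0 := (spanF g).1 (lin_span_face Fg).
exists (e - (c / r) *: g); first by rewrite dotBl dotZl ga mulr0 subr0.
move=> x Kx; set t := dot x a.
have := a_ge0 Kx; rewrite -/t le_eqVlt => /predU1P[t0|tpos].
  by rewrite -t0 scale0r subr0; apply: cone_span_face => //; apply/spanF.
have [f Ff xf] := near x Kx; set b := x - t *: e - f.
have ba : dot b a = 0.
  by rewrite !dotBl dotZl ea mulr1 subrr ((spanF f).1 (lin_span_face Ff)) subr0.
have tcr : 0 < t * (c / r) by rewrite mulr_gt0 // divr_gt0.
have Fgb : F (g + (t * (c / r))^-1 *: b).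
  apply: ball; first by apply/spanF; rewrite dotZl ba mulr0.
  rewrite enormZ ger0_norm ?invr_ge0 ?(ltW tcr) // ler_pdivrMl //.
  by have -> : t * (c / r) * r = c * t by field; rewrite gt_eqF.
suff -> : x - t *: (e - c / r *: g) = t * (c / r) *: g + b + f.
  have := faceD (face_scale (ltW tcr) Fgb) Ff.
  by rewrite scalerDr scalerA mulfV ?gt_eqF // scale1r.
by apply/rowP => j; rewrite /b !mxE; ring.
Qed.

End Supporting.
End Hyperplane.

Lemma face_direction a g : a != 0 -> (forall x, lin_span F x <-> dot x a = 0) ->
  amenable_face K F -> relint_point F g ->
  exists2 d, dot d a = 1 & forall x, K x -> F (x - dot x a *: d).
Proof.
move=> a0 spanF amen relg.
have [a_ge0|a_le0] := cone_halfspace spanF.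
  exact: (face_direction_ge0 spanF a_ge0 (dot_normalized a0) amen relg).
have spanFN x : lin_span F x <-> dot x (- a) = 0.
  by rewrite dotNr spanF; split=> [->|/eqP]; rewrite ?oppr0 // oppr_eq0 => /eqP.
have aN_ge0 x : K x -> 0 <= dot x (- a) by rewrite dotNr oppr_ge0; exact: a_le0.
have aN0 : - a != 0 by rewrite oppr_eq0.
have [d da hd] := face_direction_ge0 spanFN aN_ge0 (dot_normalized aN0) amen relg.
exists (- d); first by rewrite dotNl -dotNr.
by move=> x Kx; rewrite scalerN -scaleNr -dotNr; exact: hd.
Qed.

Lemma image_oblique_proj a d : (forall x, lin_span F x <-> dot x a = 0) ->
  (forall x, K x -> F (x - dot x a *: d)) -> [set x *m oblique_proj a d | x in K] = F.
Proof.
move=> spanF hd; apply/seteqP; split=> [_ [x Kx <-]|x Fx].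
  by rewrite mul_oblique_proj; exact: hd.
exists x; first exact: face_subset.
by rewrite mul_oblique_proj ((spanF x).1 (lin_span_face Fx)) scale0r subr0.
Qed.

End Face.

Lemma face_rV0 (R : realType) (K F : set 'rV[R]_0) :
  is_face K F -> [set x *m 1%:M | x in K] = F.
Proof.
case=> [[f Ff] [FK _]]; apply/seteqP; split=> [_ [x _ <-]|x _].
  by rewrite (thinmx0 (_ *m _)) -(thinmx0 f).
by exists x; rewrite ?mulmx1 // (thinmx0 x) -(thinmx0 f); exact: FK.
Qed.

Theorem theorem6p2 (R : realType) (n : nat) (K F : set 'rV[R]_n) :
  closed_convex_cone K -> pointed K -> full_dimensional K ->
  amenable_face K F -> has_dim F n.-1 ->
  proj_exposed K F.
Proof.
move=> [_ cK] _ _ amen [A [rfA spanA]]; have fF := amen.1; split=> //.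
case: n K F A rfA spanA cK amen fF => [|m] K F A rfA spanA cK amen fF.
  by exists 1%:M; rewrite mulmx1 (face_rV0 fF).
have [a a0 hypA] := row_free_hyperplane rfA.
have spanF x : lin_span F x <-> dot x a = 0 := iff_trans (spanA x) (hypA x).
have [g relg] := exists_relint_point cK fF spanA.
have [d da hd] := face_direction cK fF a0 spanF amen relg.
exists (oblique_proj a d); split; first exact: oblique_proj_idem.
exact: (image_oblique_proj fF spanF hd).
Qed.
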